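(* Let $g \ge h \ge 2$ be integers. There is a constant $c>0$ depending only on $g$ and $h$ such that for every positive integer $n$ there exists a weak-$C_h[g]$ set $A \subset \{1,2,\dots,n\}$ with $$|A| \ge c\, n^{\left(1-\frac{1}{h}\right)\left(1-\frac{1}{g}\right)\left(1+\frac{1}{hg-1}\right)}.$$
   Context: A set of integers $A$ is called a weak-$C_h[g]$ set if for every set $X$ of $h$ integers there do not exist $g$ distinct integers $k_1,\dots,k_g$ such that the translates $X+k_1,\dots,X+k_g$ are pairwise disjoint and all contained in $A$ (here $X+k=\{x+k : x\in X\}$). In words, $A$ contains no $g$ pairwise disjoint translates of a common $h$-element set. *)

From mathcomp Require Import all_boot all_algebra.
From mathcomp Require Import finmap.
From Stdlib Require Import Reals.
Set Implicit Arguments. Unset Strict Implicit. Unset Printing Implicit Defensive.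
Import GRing.Theory Num.Theory.
Local Open Scope fset_scope.
Local Open Scope ring_scope.

Definition translate (X : {fset int}) (k : int) : {fset int} :=
  [fset x + k | x in X].

Definition weak_Chg (h g : nat) (A : {fset int}) : Prop :=
  ~ exists (X K : {fset int}),
      [/\ #|` X| = h, #|` K| = g,
          (forall k1 k2, k1 \in K -> k2 \in K -> k1 != k2 ->
             [disjoint translate X k1 & translate X k2]) &
          (forall k, k \in K -> translate X k `<=` A)].

Definition weak_exponent (h g : nat) : R :=
  Rmult (Rmult (Rminus R1 (Rinv (INR h))) (Rminus R1 (Rinv (INR g))))
        (Rplus R1 (Rinv (Rminus (INR (h * g)%N) R1))).

Definition sub_interval (n : nat) (A : {fset int}) : Prop :=
  forall a : int, a \in A -> (1 <= a) && (a <= n%:Z).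

From Stdlib Require Import Reals Lra.
From mathcomp Require Import all_boot all_algebra.
From mathcomp Require Import finmap.
From mathcomp Require Import zify.
Set Implicit Arguments. Unset Strict Implicit. Unset Printing Implicit Defensive.
Import GRing.Theory Num.Theory.

(* The deletion method.  Colour every point of {1, ..., n} with one of q + 1
   colours uniformly at random and keep the points of colour 0.  After
   normalising X to contain 0, a forbidden configuration (g pairwise disjoint
   translates of an h-set) is a set of hg points determined by h - 1 offsets
   in (-n, n) and g positions in {1, ..., n}, so there are at most
   (2n)^(h-1) n^g of them, and each is kept with probability (q+1)^(-hg).
   Removing one point from each kept configuration leaves a weak-C_h[g] set of
   expected size at least n/(q+1) - (2n)^(h-1) n^g / (q+1)^(hg).  Choosing q
   minimal with 2^h n^(h+g-2) <= (q+1)^(hg-1) makes this at least n/(2(q+1)),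
   which is of order n^(1 - (h+g-2)/(hg-1)); that is the stated exponent. *)

Lemma exists_leq_of_sum_leq (I : finType) (i0 : I) (a b : I -> nat) :
  \sum_i a i <= \sum_i b i -> exists i, a i <= b i.
Proof.
move=> le_ab; apply/existsP; apply: contraLR le_ab; rewrite negb_exists -ltnNge.
move=> /forallP lt_ba; have {}lt_ba i : b i < a i by rewrite ltnNge.
apply: (@leq_trans (\sum_i (b i).+1)); last exact: leq_sum.
under [X in _ <= X]eq_bigr do rewrite -addn1.
by rewrite big_split /= sum1_card -addn1 leq_add2l; apply/card_gt0P; exists i0.
Qed.

Lemma card_bigcup_leq (I T : finType) (P : {pred I}) (V : I -> {set T}) :
  #|\bigcup_(i in P) V i| <= \sum_(i in P) #|V i|.
Proof.
apply: (big_ind2 (fun (X : {set T}) n => #|X| <= n)) => // [|X m Y n leXm leYn].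
  by rewrite cards0.
by rewrite (leq_trans (leq_card_setU X Y)) ?leq_add.
Qed.

Lemma card_bigcup_disjoint (I T : finType) (P : {pred I}) (V : I -> {set T}) :
  {in P &, forall i j, i != j -> [disjoint V i & V j]} ->
  #|\bigcup_(i in P) V i| = \sum_(i in P) #|V i|.
Proof.
move=> disjV; pose W i := if i \in P then V i else set0.
have -> : \bigcup_(i in P) V i = \bigcup_i W i by rewrite big_mkcond.
rewrite -sum1_card partition_disjoint_bigcup => [|i j neq_ij]; last first.
  rewrite /W; case: ifP => Pi; case: ifP => Pj; by rewrite -setI_eq0 ?setI0 ?set0I ?setI_eq0 ?disjV.
rewrite [RHS]big_mkcond /=; apply: eq_bigr => i _; rewrite /W.
by case: ifP => _; rewrite sum1_card ?cards0.
Qed.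

Lemma exists_hitting_set (T : finType) (B : {set {set T}}) :
  set0 \notin B -> exists2 W : {set T}, #|W| <= #|B| &
    forall U, U \in B -> ~~ [disjoint U & W].
Proof.
move=> B_nonempty; pose pt (U : {set T}) := if [pick x in U] is Some x then [set x] else set0.
exists (\bigcup_(U in B) pt U).
  apply: leq_trans (card_bigcup_leq B pt) _; rewrite -sum1_card; apply: leq_sum => U _.
  by rewrite /pt; case: pickP => [x _|_]; rewrite ?cards1 ?cards0.
move=> U UB; have /set0Pn[x xU] : U != set0 by apply: contraNneq B_nonempty => <-.
have [y yU pt_U] : exists2 y, y \in U & pt U = [set y].
  by rewrite /pt; case: pickP => [y yU|/(_ x)]; [exists y | rewrite xU].
rewrite -setI_eq0; apply/set0Pn; exists y; rewrite inE yU; apply/bigcupP.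
by exists U; rewrite // pt_U set11.
Qed.

Lemma bin_leq_exp n k : 'C(n, k) <= n ^ k.
Proof.
apply: leq_trans (leq_pmulr _ (fact_gt0 k)) _.
have -> : n ^ k = \prod_(i < k) n by rewrite prod_nat_const card_ord.
rewrite bin_ffact ffact_prod.
by apply: leq_prod => i _; apply: leq_subr.
Qed.

Lemma card_preim_fset (T : finType) (U : choiceType) (e : T -> U) (Y : {fset U}) :
  injective e -> {subset Y <= codom e} -> #|[set i | e i \in Y]| = #|` Y|.
Proof.
move=> inj_e Y_codom; rewrite cardE -(size_map e); apply/perm_size/uniq_perm.
- by rewrite map_inj_uniq ?enum_uniq.
- exact: fset_uniq.
move=> y; apply/mapP/idP => [[i]|yY]; first by rewrite mem_enum inE => ? ->.
by have /codomP[i eiy] := Y_codom y yY; exists i; rewrite // mem_enum inE -eiy.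
Qed.

Section Deletion.

Variables (T : finType) (q : nat).

Definition zeros (f : {ffun T -> 'I_q.+1}) : {set T} := [set i | f i == ord0].

Lemma in_zeros f i : (i \in zeros f) = (f i == ord0).
Proof. by rewrite inE. Qed.

Lemma card_ffun_zero_on (U : {set T}) :
  #|[set f | U \subset zeros f]| * q.+1 ^ #|U| = q.+1 ^ #|T|.
Proof.
have -> : #|[set f | U \subset zeros f]| =
          #|family (fun i => if i \in U then pred1 (@ord0 q) else predT)|.
  apply: eq_card => f; rewrite inE; apply/subsetP/familyP => [sub i|fam i iU].
    by case: ifP => // /sub; rewrite in_zeros.
  by have := fam i; rewrite iU in_zeros.
rewrite card_family foldrE big_map big_enum /= (bigID (mem U)) /=.
rewrite big1 => [|i ->]; last by rewrite card1.
rewrite mul1n (eq_bigr (fun _ => q.+1)) => [|i /negbTE ->]; last by rewrite card_ord.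
by rewrite prod_nat_const -expnD addnC cardC.
Qed.

Lemma sum_card_zeros : (\sum_f #|zeros f|) * q.+1 = #|T| * q.+1 ^ #|T|.
Proof.
under eq_bigr do rewrite -sum1_card big_mkcond /=.
rewrite exchange_big big_distrl /= -sum_nat_const; apply: eq_bigr => i _.
rewrite -(card_ffun_zero_on [set i]) cards1 expn1; congr (_ * _).
by rewrite -sum1_card [RHS]big_mkcond; apply: eq_bigr => f _; rewrite inE sub1set.
Qed.

Variables (F : {set {set T}}) (r : nat).
Hypothesis F_large : forall U, U \in F -> r.+1 <= #|U|.

Definition covered (f : {ffun T -> 'I_q.+1}) : {set {set T}} :=
  [set U in F | U \subset zeros f].

Lemma sum_card_covered : (\sum_f #|covered f|) * q.+1 ^ r.+1 <= #|F| * q.+1 ^ #|T|.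
Proof.
under eq_bigr do rewrite -sum1_card big_mkcond /=.
rewrite exchange_big big_distrl /= -[#|F|]sum1_card.
rewrite [X in _ <= X]big_distrl /= [X in _ <= X]big_mkcond /=.
apply: leq_sum => U _; case: ifP => UF; last first.
  by rewrite big1 ?mul0n // => f _; rewrite inE UF.
rewrite mul1n -(card_ffun_zero_on U); apply: leq_mul; last by rewrite leq_pexp2l ?F_large.
by rewrite -sum1_card [X in _ <= X]big_mkcond; apply/eq_leq/eq_bigr => f _; rewrite !inE UF.
Qed.

Lemma exists_good_coloring : exists f,
  #|T| * q.+1 ^ r + q.+1 ^ r.+1 * #|covered f| <= q.+1 ^ r.+1 * #|zeros f| + #|F|.
Proof.
apply: exists_leq_of_sum_leq; first exact: [ffun=> ord0].
rewrite !big_split /= !sum_nat_const card_ffun !card_ord -!big_distrr /=.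
have := sum_card_covered; have := sum_card_zeros.
set a := \sum_f _; set b := \sum_f _; rewrite expnS.
set Q := q.+1; set P := Q ^ r; set E := Q ^ #|T| => zeros_a covered_b.
have -> : Q * P * a = E * (#|T| * P) by rewrite mulnAC (mulnC Q) zeros_a mulnCA mulnA.
by rewrite leq_add2l mulnC [E * _]mulnC.
Qed.

Lemma exists_large_free_set : exists2 A : {set T},
    (forall U, U \in F -> ~~ (U \subset A)) &
    #|T| * q.+1 ^ r <= q.+1 ^ r.+1 * #|A| + #|F|.
Proof.
have [f le_f] := exists_good_coloring.
have [|W le_W hit_W] := exists_hitting_set (B := covered f).
  apply/negP; rewrite inE => /andP[/F_large]; by rewrite cards0.
exists (zeros f :\: W) => [U UF|].
  rewrite subsetD; apply/negP => /andP[U_zeros U_W].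
  by have := hit_W U; rewrite inE UF U_zeros U_W => /(_ isT).
have le_zeros : #|zeros f| <= #|zeros f :\: W| + #|covered f|.
  by rewrite -(cardsID W (zeros f)) addnC leq_add2l (leq_trans _ le_W) ?subset_leq_card ?subsetIr.
have := leq_mul (leqnn (q.+1 ^ r.+1)) le_zeros; rewrite mulnDr.
move: le_f; set x := #|T| * _; set y := _ * #|covered f|; lia.
Qed.

End Deletion.

Section Configurations.

Local Open Scope ring_scope.

Lemma mem_translate (X : {fset int}) k z : (z \in translate X k) = (z - k \in X).
Proof.
apply/imfsetP/idP => [[x /= xX ->]|zX]; first by rewrite addrK.
by exists (z - k); rewrite ?subrK.
Qed.

Lemma card_translate (X : {fset int}) k : #|` translate X k| = #|` X|.
Proof. by rewrite card_imfset //; apply: addIr. Qed.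

Lemma ord_of_int (m : nat) (z : int) : 0 <= z -> z < m%:Z -> exists i : 'I_m, i%:Z = z.
Proof. by case: z => // k _ lt_km; exists (Ordinal (lt_km : (k < m)%N)). Qed.

Variable n : nat.

Definition emb (i : 'I_n) : int := (i.+1)%:Z.

Definition embset (A : {set 'I_n}) : {fset int} := [fset emb i | i in A]%fset.

Lemma emb_inj : injective emb.
Proof. by move=> i j /eqP; rewrite /emb eqz_nat eqSS => /eqP /val_inj. Qed.

Lemma card_embset A : #|` embset A| = #|A|.
Proof. by rewrite card_imfset /= ?cardE //; apply: emb_inj. Qed.

Lemma sub_interval_embset A : sub_interval n (embset A).
Proof. by move=> _ /imfsetP[i /= _ ->]; rewrite /emb !lez_nat ltn_ord. Qed.

Definition offsets (X : {fset int}) (x0 : int) : {set 'I_(n + n)} :=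
  [set p : 'I_(n + n) | p%:Z - n%:Z + x0 \in (X `\ x0)%fset].

Lemma mem_translate_emb (X : {fset int}) (x0 : int) i j : x0 \in X ->
  (emb i \in translate X (emb j - x0)) =
  (i == j) || [exists p : 'I_(n + n) in offsets X x0, (p + j == i + n)%N].
Proof.
move=> x0X; rewrite mem_translate.
have -> : emb i - (emb j - x0) = i%:Z - j%:Z + x0 by rewrite /emb; lia.
have [-> | neq_ij] := eqVneq i j; first by rewrite subrr add0r.
apply/idP/existsP => [iX | [p /andP[]]]; last first.
  rewrite inE => /fsetD1P[_ pX] /eqP eq_p.
  by have -> : i%:Z - j%:Z + x0 = p%:Z - n%:Z + x0 by lia.
have lt_p : (i + n - j < n + n)%N by have := ltn_ord i; lia.
exists (Ordinal lt_p); apply/andP; split; last by apply/eqP; have := ltn_ord j; rewrite /=; lia.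
rewrite inE /=.
have -> : (i + n - j)%N%:Z - n%:Z + x0 = i%:Z - j%:Z + x0 by have := ltn_ord j; lia.
apply/fsetD1P; split=> //; apply: contra_neq neq_ij => /eqP.
by rewrite -subr_eq0 addrK subr_eq0 eqz_nat => /eqP /val_inj.
Qed.

Definition emb_preim (Y : {fset int}) : {set 'I_n} := [set i | emb i \in Y].

Lemma emb_preim_sub A Y : (Y `<=` embset A)%fset -> emb_preim Y \subset A.
Proof.
move=> /fsubsetP sub_YA; apply/subsetP => i; rewrite inE => /sub_YA.
by case/imfsetP => j /= jA /emb_inj ->.
Qed.

Lemma card_emb_preim A Y : (Y `<=` embset A)%fset -> #|emb_preim Y| = #|` Y|.
Proof.
move=> /fsubsetP sub_YA; apply: card_preim_fset => [|y /sub_YA]; first exact: emb_inj.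
by case/imfsetP => i _ ->; apply: codom_f.
Qed.

Lemma emb_preim_disjoint Y Z : [disjoint Y & Z]%fset -> [disjoint emb_preim Y & emb_preim Z].
Proof.
move=> /fdisjointP disj_YZ; rewrite -setI_eq0; apply/eqP/setP => i.
by rewrite !inE; apply/negbTE/andP => -[/disj_YZ /negP].
Qed.

(* [config (P, Q)] is the union of the translates j + D, j in Q, of
   D = {0} u {p - n | p in P}. *)
Definition config (PQ : {set 'I_(n + n)} * {set 'I_n}) : {set 'I_n} :=
  [set i | [exists j in PQ.2, (i == j) || [exists p in PQ.1, (p + j == i + n)%N]]].

Definition config_params (h g : nat) : {set {set 'I_(n + n)} * {set 'I_n}} :=
  setX [set P : {set 'I_(n + n)} | #|P| == h.-1] [set Q : {set 'I_n} | #|Q| == g].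

Definition configs (h g : nat) : {set {set 'I_n}} :=
  [set U in config @: config_params h g | (h * g <= #|U|)%N].

Lemma card_configs h g : (#|configs h g| <= (n + n) ^ h.-1 * n ^ g)%N.
Proof.
apply: (@leq_trans #|config @: config_params h g|).
  by apply/subset_leq_card/subsetP => U; rewrite inE => /andP[].
by rewrite (leq_trans (leq_imset_card _ _)) // cardsX !card_draws !card_ord leq_mul ?bin_leq_exp.
Qed.

Section Translates.

Variables (A : {set 'I_n}) (X K : {fset int}) (x0 : int).
Hypothesis x0X : x0 \in X.
Hypothesis disjoint_translates : forall k1 k2, k1 \in K -> k2 \in K -> k1 != k2 ->
  [disjoint translate X k1 & translate X k2]%fset.
Hypothesis translates_sub : forall k, k \in K -> (translate X k `<=` embset A)%fset.

(* With [x0] in [X], each translate X + k equals (X - x0) + (j + 1) for the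
   index j in [shifts], while X - x0 = {0} u {p - n | p in offsets X x0}. *)
Definition shifts : {set 'I_n} := [set j | emb j - x0 \in K].

Lemma translate_range x k : x \in X -> k \in K -> 1 <= x + k <= n%:Z.
Proof.
move=> xX kK; apply: (sub_interval_embset (A := A)).
by apply: (fsubsetP (translates_sub kK)); rewrite mem_translate addrK.
Qed.

Lemma card_shifts : #|shifts| = #|` K|.
Proof.
apply: card_preim_fset => [i j /addIr /emb_inj // | k kK].
have /andP[lo hi] := translate_range x0X kK.
have [j ej] : exists j : 'I_n, j%:Z = x0 + k - 1 by apply: ord_of_int; lia.
by apply/codomP; exists j; rewrite /emb; lia.
Qed.

Lemma card_offsets k0 : k0 \in K -> #|offsets X x0| = (#|` X|).-1.
Proof.
move=> k0K; rewrite /offsets card_preim_fset ?(cardfsD1 x0 X) ?x0X //.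
  by move=> p p' /addIr /addIr /eqP; rewrite eqz_nat => /eqP /val_inj.
move=> x /fsetD1P[_ xX]; have /andP[lo hi] := translate_range xX k0K.
have /andP[lo0 hi0] := translate_range x0X k0K.
have [p ep] : exists p : 'I_(n + n), p%:Z = x - x0 + n%:Z by apply: ord_of_int; lia.
by apply/codomP; exists p; rewrite ep; lia.
Qed.

Lemma config_shifts :
  config (offsets X x0, shifts) = \bigcup_(j in shifts) emb_preim (translate X (emb j - x0)).
Proof.
apply/setP => i; rewrite inE; apply/existsP/bigcupP => [[j /andP[jS ij]] | [j jS]].
  by exists j; rewrite // inE mem_translate_emb.
by rewrite inE mem_translate_emb // => ij; exists j; rewrite jS.
Qed.

Lemma config_shifts_sub : config (offsets X x0, shifts) \subset A.
Proof.
rewrite config_shifts; apply/bigcupsP => j; rewrite inE => jK.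
exact/emb_preim_sub/translates_sub.
Qed.

Lemma card_config_shifts : #|config (offsets X x0, shifts)| = (#|` X| * #|` K|)%N.
Proof.
rewrite config_shifts card_bigcup_disjoint => [|i j]; last first.
  rewrite !inE => iK jK neq_ij; apply/emb_preim_disjoint/disjoint_translates => //.
  by apply: contra_neq neq_ij => /addIr /emb_inj.
rewrite (eq_bigr (fun _ => #|` X|)) => [|j]; last first.
  by rewrite inE => jK; rewrite (card_emb_preim (translates_sub jK)) card_translate.
by rewrite sum_nat_const card_shifts mulnC.
Qed.

End Translates.

Lemma weak_Chg_embset h g (A : {set 'I_n}) : (0 < h)%N -> (0 < g)%N ->
  (forall U, U \in configs h g -> ~~ (U \subset A)) -> weak_Chg h g (embset A).
Proof.
move=> h_gt0 g_gt0 A_free [X [K [cardX cardK disjK subK]]].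
have [x0 x0X] : exists x0, x0 \in X by apply/fset0Pn; rewrite -cardfs_gt0 cardX.
have [k0 k0K] : exists k0, k0 \in K by apply/fset0Pn; rewrite -cardfs_gt0 cardK.
suff : config (offsets X x0, shifts K x0) \in configs h g.
  by move/A_free; rewrite (config_shifts_sub x0X subK).
rewrite inE (card_config_shifts x0X disjK subK) cardX cardK leqnn andbT.
apply/imsetP; exists (offsets X x0, shifts K x0) => //.
by rewrite !inE (card_offsets x0X subK k0K) (card_shifts x0X subK) cardX cardK !eqxx.
Qed.

End Configurations.

Lemma exists_root_bracket b m : 0 < b -> 0 < m -> exists q, q ^ m < b <= q.+1 ^ m.
Proof.
move=> b_gt0 m_gt0; have ex_k : exists k, b <= k ^ m by exists b; rewrite -{1}(expn1 b) leq_pexp2l.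
case: (ex_minnP ex_k) => -[|q]; first by rewrite exp0n // leqNgt b_gt0.
by move=> le_b min_k; exists q; rewrite le_b andbT ltnNge; apply/negP => /min_k; rewrite ltnn.
Qed.

Lemma double_card_configs n h g : 0 < h -> 0 < g ->
  2 * #|configs n h g| <= n * (2 ^ h * n ^ (h + g - 2)).
Proof.
move=> h_gt0 g_gt0; apply: leq_trans (leq_mul (leqnn 2) (card_configs n h g)) _.
rewrite addnn -mul2n expnMn !mulnA -expnS prednK // -mulnA -expnD.
have -> : (h.-1 + g = (h + g - 2).+1)%N by lia.
by rewrite expnS mulnCA mulnA.
Qed.

Lemma exists_large_weak_Chg n h g : 1 < h -> 0 < g -> 0 < n ->
  exists q (A : {set 'I_n}), [/\ weak_Chg h g (embset A),
    q ^ (h * g).-1 < 2 ^ h * n ^ (h + g - 2) & n <= 2 * q.+1 * #|A|].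
Proof.
move=> h_gt1 g_gt0 n_gt0; set r := (h * g).-1; set s := (h + g - 2)%N.
have hg_eq : r.+1 = h * g by rewrite prednK // muln_gt0 g_gt0 ltnW.
have [q /andP[lt_q le_q]] : exists q, q ^ r < 2 ^ h * n ^ s <= q.+1 ^ r.
  by apply: exists_root_bracket; rewrite ?muln_gt0 ?expn_gt0 ?n_gt0 // -ltnS hg_eq; nia.
have F_large U : U \in configs n h g -> r.+1 <= #|U| by rewrite inE hg_eq => /andP[].
have [A A_free le_A] := exists_large_free_set q F_large.
exists q, A; split=> //; first exact: weak_Chg_embset (ltnW h_gt1) g_gt0 A_free.
have le_F := leq_trans (double_card_configs n (ltnW h_gt1) g_gt0) (leq_mul (leqnn n) le_q).
rewrite card_ord in le_A; rewrite -(leq_pmul2r (expn_gt0 q.+1 r)).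
have -> : 2 * q.+1 * #|A| * q.+1 ^ r = 2 * (q.+1 ^ r.+1 * #|A|).
  by rewrite expnS -!mulnA; congr (_ * (_ * _)); rewrite mulnC.
move: le_A le_F; set a := q.+1 ^ r.+1 * _; set b := n * _; lia.
Qed.

Section RealBounds.

Local Open Scope R_scope.

Lemma INR_two : INR 2 = 2.
Proof. by rewrite /=; lra. Qed.

Lemma INR_expn m e : INR (m ^ e) = INR m ^ e.
Proof. by elim: e => [|e IHe] //=; rewrite expnS mult_INR IHe. Qed.

Lemma weak_exponentE h g : (1 <= h)%N -> (1 <= g)%N -> (2 <= h * g)%N ->
  weak_exponent h g = 1 - INR (h + g - 2) / INR (h * g).-1.
Proof.
move=> h1 g1 hg2; rewrite /weak_exponent.
have Es : INR (h + g - 2) = INR h + INR g - 2.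
  by rewrite minus_INR ?plus_INR //; apply/leP; lia.
have Em : INR (h * g).-1 = INR h * INR g - 1.
  by have := S_INR (h * g).-1; rewrite prednK ?mult_INR; [lra | lia].
have Hh : 1 <= INR h by apply: (le_INR 1); apply/leP.
have Hg : 1 <= INR g by apply: (le_INR 1); apply/leP.
have Hhg : 2 <= INR h * INR g by rewrite -mult_INR; apply: (le_INR 2); apply/leP.
rewrite Es Em mult_INR; field; lra.
Qed.

Lemma Rpower_lower_bound (C N x y : R) (s m : nat) : (0 < m)%N -> 1 <= C -> 1 <= N ->
  0 <= x -> x ^ m < C * N ^ s -> N <= 2 * (x + 1) * y ->
  / (2 * (C + 1)) * Rpower N (1 - INR s / INR m) <= y.
Proof.
move=> m_gt0 C1 N1 x_ge0 x_lt le_N.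
have m0 : 0 < INR m by apply: lt_0_INR; apply/ltP.
set Na := Rpower N (INR s / INR m).
have Na_pow : Na ^ m = N ^ s.
  rewrite /Na -Rpower_pow; last exact: exp_pos.
  by rewrite Rpower_mult -Rpower_pow; [congr Rpower; field; lra | lra].
have Na1 : 1 <= Na.
  rewrite /Na -(Rpower_O N); last lra.
  by apply: Rle_Rpower => //; apply: Rmult_le_pos; [apply: pos_INR | apply/Rlt_le/Rinv_0_lt_compat].
have x_lt_CNa : x < C * Na.
  apply: Rnot_le_lt => le_x; apply: (Rlt_not_le _ _ x_lt).
  have C_le : C <= C ^ m by rewrite -{1}(pow_1 C); apply: Rle_pow => //; apply/leP.
  have : (C * Na) ^ m <= x ^ m by apply: pow_incr; split; [nra | lra].
  have Ns : 0 < N ^ s by apply: pow_lt; lra.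
  rewrite Rpow_mult_distr Na_pow; nra.
have -> : Rpower N (1 - INR s / INR m) = N / Na.
  have E : Rpower N (1 - INR s / INR m) * Na = N.
    by rewrite /Na -Rpower_plus Rplus_comm Rplus_minus Rpower_1 //; lra.
  by apply: (Rmult_eq_reg_r Na); [rewrite E; field | ]; lra.
have le_y : N / (2 * (x + 1)) <= y.
  apply: (Rmult_le_reg_r (2 * (x + 1))); first lra.
  by rewrite /Rdiv Rmult_assoc Rinv_l; nra.
apply: Rle_trans le_y; rewrite /Rdiv -Rmult_assoc (Rmult_comm _ N) Rmult_assoc -Rinv_mult.
apply: Rmult_le_compat_l; first lra.
apply: Rinv_le_contravar; nra.
Qed.

Definition weak_constant (h : nat) : R := / (2 * (2 ^ h + 1)).

Lemma weak_constant_gt0 h : 0 < weak_constant h.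
Proof. by apply: Rinv_0_lt_compat; have := pow_lt 2 h; lra. Qed.

Lemma weak_constant_bound h g n q a : (1 < h)%N -> (0 < g)%N -> (0 < n)%N ->
  (q ^ (h * g).-1 < 2 ^ h * n ^ (h + g - 2))%N -> (n <= 2 * q.+1 * a)%N ->
  weak_constant h * Rpower (INR n) (weak_exponent h g) <= INR a.
Proof.
move=> h_gt1 g_gt0 n_gt0 lt_q le_n.
have hg_gt1 : (1 < h * g)%N by rewrite (leq_mul h_gt1 g_gt0).
rewrite weak_exponentE ?(ltnW h_gt1) //; apply: (Rpower_lower_bound (x := INR q)).
- by rewrite -ltnS prednK // ltnW.
- by apply: pow_R1_Rle; lra.
- by apply: (le_INR 1); apply/leP.
- exact: pos_INR.
- by have := lt_INR _ _ (elimT ltP lt_q); rewrite mult_INR !INR_expn INR_two.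
- by have := le_INR _ _ (elimT leP le_n); rewrite !mult_INR INR_two S_INR.
Qed.

End RealBounds.

Theorem theorem2 (g h : nat) (hh : (2 <= h)%N) (hgh : (h <= g)%N) :
  exists c : R, Rlt R0 c /\
    forall n : nat, (0 < n)%N ->
      exists A : {fset int},
        sub_interval n A /\
        weak_Chg h g A /\
        Rle (Rmult c (Rpower (INR n) (weak_exponent h g))) (INR #|` A|).
Proof.
have g_gt0 : 0 < g by apply: leq_trans hgh; apply: ltnW.
exists (weak_constant h); split=> [|n n_gt0]; first exact: weak_constant_gt0.
have [q [A [weak_A lt_q le_n]]] := exists_large_weak_Chg hh g_gt0 n_gt0.
exists (embset A); split; [exact: sub_interval_embset | split=> //].
by rewrite card_embset; apply: (weak_constant_bound hh g_gt0 n_gt0 lt_q le_n).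
Qed.
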